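(* (Generalized Goursat lemma.) Let $G$ be a pseudosimple group, $k\ge 1$, and let $H\subseteq G^{[k]}$ be a subgroup that surjects onto each of the $k$ coordinate factors $G$. Then: (1) $H$ is isomorphic over $G^{\mathrm{ab}}$ to $G^{[w]}$ for some $w\le k$; (2) there are a surjection $f:\{1,\dots,k\}\to\{1,\dots,w\}$ and automorphisms $\varphi_1,\dots,\varphi_k$ of $G$ over $G^{\mathrm{ab}}$ such that $H$ is the image of $G^{[w]}$ under $(g_1,\dots,g_w)\mapsto(\varphi_1(g_{f(1)}),\dots,\varphi_k(g_{f(k)}))$.
   Context: $G'$ is the derived subgroup, $G^{\mathrm{ab}}=G/G'$. $G$ is pseudosimple if it is a finite centerless group, $G'$ is isomorphic to a power of a nonabelian simple group, and $G/N$ is abelian for every nontrivial normal subgroup $N$. $G^{[m]}=G\times_{G^{\mathrm{ab}}}\cdots\times_{G^{\mathrm{ab}}}G$ ($m$ factors) is the fiber power, mapping to $G^{\mathrm{ab}}$ via any coordinate; subgroups of it map to $G^{\mathrm{ab}}$ by restriction. For groups $G_1,G_2$ with homomorphisms $\pi_1,\pi_2$ to $Q$, an isomorphism over $Q$ is an isomorphism $i:G_1\to G_2$ with $\pi_2\circ i=\pi_1$; an automorphism of $G$ over $G^{\mathrm{ab}}$ is one inducing the identity on $G^{\mathrm{ab}}$. *)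

From HB Require Import structures.
From mathcomp Require Import all_boot all_fingroup commutator center gseries.
Set Implicit Arguments. Unset Strict Implicit. Unset Printing Implicit Defensive.
Local Open Scope group_scope.

Notation tupG gT m := {dffun forall i : 'I_m, (fun _ : 'I_m => gT) i}.

Definition pseudosimple (gT : finGroupType) (G : {group gT}) : Prop :=
  'Z(G) = 1 /\
  (exists (sT : finGroupType) (S : {group sT}) (n : nat),
      simple S /\ ~~ abelian S /\
      G^`(1) \isog setXn (fun _ : 'I_n => S)) /\
  (forall N : {group gT}, N <| G -> N :!=: 1 -> abelian (G / N)).

(* The fiber power G^[m] = G x_{G^ab} ... x_{G^ab} G (m factors), as a
   subset of the m-fold direct power: tuples in G^m whose coordinates all
   have the same image in G^ab = G / G'. *)
Definition fiberpow (gT : finGroupType) (G : {group gT}) (m : nat)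
  : {set tupG gT m} :=
  setXn (fun _ : 'I_m => G) :&:
  [set x : tupG gT m | [forall i, [forall j,
      coset G^`(1) (x i) == coset G^`(1) (x j)]]].

Definition aut_over_ab (gT : finGroupType) (G : {group gT}) (a : {perm gT})
  : Prop :=
  a \in Aut G /\ forall g, g \in G -> coset G^`(1) (a g) = coset G^`(1) g.

From HB Require Import structures.
From mathcomp Require Import all_boot all_fingroup commutator center gseries.
Set Implicit Arguments. Unset Strict Implicit. Unset Printing Implicit Defensive.
Local Open Scope group_scope.

(* Call coordinates i and j of H equivalent when the projections of H onto G
   at i and at j have the same kernel; as both are onto G, an inclusion
   between two such kernels is already an equality. Keeping one coordinate
   per class gives an injective morphism from H to G^[w]. It is onto because,
   for a coordinate i and coordinates s inequivalent to i, the image at i of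
   the elements of H trivial on s is normal in G and, by induction on s,
   contains [G', G'], which is nontrivial as G' is nonabelian; so it contains
   G'. Equivalent coordinates are related by the automorphism of G induced by
   the equal kernels, which is trivial on G^ab as H lies in the fiber power. *)

Lemma fiberpowP (gT : finGroupType) (G : {group gT}) m (x : tupG gT m) :
  reflect ((forall i, x i \in G) /\
           (forall i j, coset G^`(1) (x i) = coset G^`(1) (x j)))
          (x \in fiberpow G m).
Proof.
rewrite /fiberpow inE in_setXn inE; apply: (iffP andP).
  case=> /forallP xG /forallP xco; split=> // i j.
  by move/forallP: (xco i) => /(_ j) /eqP.
case=> xG xco; split; first exact/forallP.
by apply/forallP=> i; apply/forallP=> j; rewrite (xco i j).
Qed.

Section Pseudosimple.

Variables (gT : finGroupType) (G : {group gT}).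
Hypothesis psG : pseudosimple G.

Lemma pseudosimple_der1_sub (N : {group gT}) :
  N <| G -> N :!=: 1 -> G^`(1) \subset N.
Proof.
case: psG => _ [_ abGN] nNG ntN; apply: der1_min (abGN N nNG ntN).
exact: normal_norm.
Qed.

Lemma pseudosimple_der1_nonabelian : G^`(1) :!=: 1 -> ~~ abelian G^`(1).
Proof.
case: psG => _ [[sT [S [n [_ [nabS isoD]]]]] _] ntD; apply: contra nabS => abD.
rewrite (isog_abelian isoD) in abD.
case: n isoD abD => [|n] isoD abD.
  case/negP: ntD; apply/eqP/card_le1_trivg; rewrite (card_isog isoD).
  by apply/card_le1_eqP => x y _ _; apply/ffunP; case.
have := morphim_abelian (@dffun_morphism _ (fun _ : 'I_n.+1 => sT) ord0) abD.
by rewrite morphim_dffunXn.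
Qed.

End Pseudosimple.

Lemma aut_of_eq_ker (aT rT : finGroupType) (D : {group aT}) (G : {group rT})
    (q r : {morphism D >-> rT}) :
  q @* D = G -> r @* D = G -> 'ker q = 'ker r ->
  exists2 p, p \in Aut G & {in D, forall x, p (q x) = r x}.
Proof.
move=> qD rD eq_ker; have sKqr : 'ker q \subset 'ker r by rewrite eq_ker.
have injf : 'injm (factm sKqr (subxx D)) by apply/injm_factmP.
have imf : factm sKqr (subxx D) @* (q @* D) = q @* D.
  by rewrite morphim_factm qD rD.
exists (aut injf imf); first by have := Aut_aut injf imf; rewrite /= qD.
by move=> x Dx; rewrite autE ?mem_morphim //; apply: factmE.
Qed.

Section Reindex.

Variables (gT : finGroupType) (m n : nat) (s : 'I_n -> 'I_m).

Definition tup_reindex (x : tupG gT m) : tupG gT n := [ffun j => x (s j)].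

Lemma tup_reindexM : {in setT &, {morph tup_reindex : x y / x * y}}.
Proof. by move=> x y _ _; apply/ffunP => j; rewrite !ffunE. Qed.

Canonical tup_reindex_morphism := Morphism tup_reindexM.

End Reindex.

Section SubdirectFiberPower.

Variables (gT : finGroupType) (G : {group gT}) (k : nat) (H : {group tupG gT k}).
Hypotheses (psG : pseudosimple G) (sHF : H \subset fiberpow G k).
Hypothesis projH : forall i : 'I_k, [set (x : tupG gT k) i | x in H] = G.

Local Notation proj i := (@dffun_morphism 'I_k (fun _ => gT) i).

Lemma morphim_proj i : proj i @* H = G.
Proof. by rewrite morphimEsub ?subsetT ?projH. Qed.

Lemma fiberpow_coord x i : x \in H -> x i \in G.
Proof. by move/(subsetP sHF)/fiberpowP=> [xG _]. Qed.

Lemma fiberpow_coset x i j :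
  x \in H -> coset G^`(1) (x i) = coset G^`(1) (x j).
Proof. by move/(subsetP sHF)/fiberpowP=> [_]; apply. Qed.

Definition kerH i := (H :&: 'ker (proj i))%G.

Lemma kerH_normal i : kerH i <| H.
Proof. exact: normalGI (subsetT H) (ker_normal _). Qed.

Lemma card_kerH i : (#|kerH i| * #|G|)%N = #|H|.
Proof. by rewrite -(morphim_proj i) card_morphim setTI LagrangeI. Qed.

Lemma kerH_sub_eq i j : kerH i \subset kerH j -> kerH i = kerH j.
Proof.
move=> sKij; apply: group_inj; apply/eqP.
by rewrite eqEcard sKij -(leq_pmul2r (cardG_gt0 G)) !card_kerH /=.
Qed.

Fixpoint kerHs (s : seq 'I_k) : {group tupG gT k} :=
  if s is j :: s' then (kerH j :&: kerHs s')%G else H.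

Lemma mem_kerHs s x : (x \in kerHs s) = (x \in H) && all (fun l => x l == 1) s.
Proof.
elim: s => [|j s IHs] /=; first by rewrite andbT.
by rewrite !in_setI IHs !inE; case: (x \in H).
Qed.

Lemma kerHs_normal s : kerHs s <| H.
Proof.
elim: s => [|j s IHs]; first exact: normal_refl.
exact: normalI (kerH_normal j) IHs.
Qed.

Lemma der1_sub_proj_kerHs i s :
  all (fun l => kerH l != kerH i) s -> G^`(1) \subset proj i @* kerHs s.
Proof.
elim: s => [|j s IHs] /=; first by rewrite morphim_proj der_sub.
case/andP=> neKji /IHs sDKs.
have [-> | ntD] := eqVneq G^`(1) 1; first exact: sub1G.
have sDKj : G^`(1) \subset proj i @* kerH j.
  apply: pseudosimple_der1_sub => //.
    by rewrite -(morphim_proj i) morphim_normal ?kerH_normal.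
  rewrite -subG1 sub_morphim_pre ?subsetT // -kerE.
  apply: contra neKji => sKji; apply/eqP/kerH_sub_eq.
  by rewrite subsetI subsetIl.
have sRK : [~: G^`(1), G^`(1)] \subset proj i @* (kerH j :&: kerHs s).
  apply: subset_trans (commgSS sDKj sDKs) _.
  rewrite -morphimR ?subsetT //; apply/morphimS/commg_subI.
    rewrite subsetI subxx (subset_trans (normal_sub (kerH_normal j))) //.
    exact/normal_norm/kerHs_normal.
  rewrite subsetI subxx (subset_trans (normal_sub (kerHs_normal s))) //.
  exact/normal_norm/kerH_normal.
apply: pseudosimple_der1_sub => //.
  by rewrite -(morphim_proj i) morphim_normal ?(kerHs_normal (j :: s)).
apply: contraNneq (pseudosimple_der1_nonabelian psG ntD) => triv.
by apply/commG1P/trivgP; rewrite -triv.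
Qed.

Definition rep i := odflt i [pick j | kerH j == kerH i].

Lemma kerH_rep i : kerH (rep i) = kerH i.
Proof. by rewrite /rep; case: pickP => [j /eqP|]. Qed.

Lemma rep_eq i j : kerH i = kerH j -> rep i = rep j.
Proof.
move=> eqKij; rewrite /rep eqKij; case: pickP => [//|noK].
by have := noK j; rewrite eqxx.
Qed.

Definition reps := [set rep i | i : 'I_k].

Lemma rep_in_reps i : rep i \in reps.
Proof. exact: imset_f. Qed.

Lemma rep_id r : r \in reps -> rep r = r.
Proof. by case/imsetP=> i _ ->; apply/rep_eq/kerH_rep. Qed.

Lemma kerH_reps_inj : {in reps &, injective kerH}.
Proof. by move=> r r' Rr Rr' /rep_eq; rewrite !rep_id. Qed.

Definition rep_rank i : 'I_#|reps| := enum_rank_in (rep_in_reps i) (rep i).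

Lemma enum_val_rep_rank i : enum_val (rep_rank i) = rep i.
Proof. exact: enum_rankK_in (rep_in_reps i). Qed.

Lemma enum_valK_rep : cancel enum_val rep_rank.
Proof.
by move=> j; apply: enum_val_inj; rewrite enum_val_rep_rank rep_id ?enum_valP.
Qed.

Definition res_reps := tup_reindex_morphism gT (@enum_val _ (mem reps)).

Lemma setXn_der1_sub_res_reps :
  setXn (fun _ : 'I_#|reps| => G^`(1)%G) \subset res_reps @* H.
Proof.
rewrite -setXn_prod; apply: prod_subG => j _.
apply/subsetP => _ /set1gXnP [a Da ->].
have Rr := enum_valP j; set r := enum_val j in Rr *.
have neKr : all (fun l => kerH l != kerH r) (enum (reps :\ r)).
  apply/allP => l; rewrite mem_enum !inE => /andP[ne_lr Rl].
  by apply: contra ne_lr => /eqP/kerH_reps_inj ->.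
have /morphimP[x _ Kx ->] := subsetP (der1_sub_proj_kerHs neKr) a Da.
rewrite mem_kerHs in Kx; case/andP: Kx => Hx x1.
apply/morphimP; exists x; rewrite ?inE //.
apply/ffunP => j'; have [<- | ne_jj'] := eqVneq j j'.
  by rewrite dfung1_id ffunE.
rewrite dfung1_dflt // ffunE; apply/esym/eqP/(allP x1).
rewrite mem_enum !inE enum_valP andbT.
by apply: contra ne_jj' => /eqP/enum_val_inj ->.
Qed.

Lemma morphim_res_reps : res_reps @* H = fiberpow G #|reps|.
Proof.
apply/eqP; rewrite eqEsubset; apply/andP; split.
  apply/subsetP => _ /morphimP[x _ Hx ->]; apply/fiberpowP.
  split=> [j | j j']; rewrite !ffunE; first exact: fiberpow_coord.
  exact: fiberpow_coset.
apply/subsetP => g /fiberpowP[gG gco].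
case: (pickP (@predT 'I_#|reps|)) => [j0 _ | no_j]; last first.
  suff -> : g = 1 by apply: group1.
  by apply/ffunP => j; have := no_j j.
have [h Hh hj0] : exists2 h, h \in H & h (enum_val j0) = g j0.
  move: (gG j0); rewrite -(projH (enum_val j0)) => /imsetP[h Hh ->].
  by exists h.
rewrite -(mulgKV (res_reps h) g) groupM ?mem_morphim ?inE //.
apply: subsetP setXn_der1_sub_res_reps _ _; apply/setXnP => j /=.
have nDG := subsetP (der_norm 1 G).
rewrite mulg_ffun invg_ffun ffunE -mem_rcoset.
apply/rcoset_kercosetP; rewrite ?nDG ?fiberpow_coord //.
by rewrite (fiberpow_coset _ (enum_val j0) Hh) hj0.
Qed.

Lemma injm_res_reps : 'injm (restrm (subsetT H) res_reps).
Proof.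
apply/subsetP => x; rewrite ker_restrm => /setIP[Hx /kerP Kx]; rewrite inE.
apply/eqP/ffunP => i; rewrite oneg_ffun.
have: x \in kerH (rep i).
  rewrite inE Hx !inE /= -enum_val_rep_rank.
  move/ffunP: (Kx (in_setT x)) => /(_ (rep_rank i)).
  by rewrite ffunE oneg_ffun => ->.
by rewrite kerH_rep => /setIP[_]; rewrite !inE => /eqP.
Qed.

Lemma exists_aut_over_ab_rep i : exists2 p : {perm gT},
  aut_over_ab G p & {in H, forall x : tupG gT k, p (x (rep i)) = x i}.
Proof.
have imH j : restrm (subsetT H) (proj j) @* H = G.
  by rewrite morphim_restrm setIid morphim_proj.
have [|p Ap pE] := aut_of_eq_ker (imH (rep i)) (imH i).
  by rewrite !ker_restrm; congr gval; apply: kerH_rep.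
exists p => //; split=> // g Gg.
have /morphimP[x _ Hx ->] : g \in proj (rep i) @* H by rewrite morphim_proj.
by have /= -> := pE x Hx; apply: fiberpow_coset.
Qed.

End SubdirectFiberPower.

Theorem lemma6p1 (gT : finGroupType) (G : {group gT}) (k : nat)
  (H : {group tupG gT k}) :
  pseudosimple G -> 0 < k ->
  H \subset fiberpow G k ->
  (forall i : 'I_k, [set (x : tupG gT k) i | x in H] = G) ->
  exists w : nat, 0 < w <= k /\
    (exists iso : {morphism H >-> tupG gT w},
        isom H (fiberpow G w) iso /\
        (forall h, h \in H -> forall (i : 'I_k) (j : 'I_w),
            coset G^`(1) (iso h j) = coset G^`(1) (h i))) /\
    (exists (f : 'I_k -> 'I_w) (phi : 'I_k -> {perm gT}),
        (forall j : 'I_w, exists i : 'I_k, f i = j) /\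
        (forall i, aut_over_ab G (phi i)) /\
        (H :=: [set ([ffun i => phi i (g (f i))] : tupG gT k)
                  | g : tupG gT w in fiberpow G w])).
Proof.
move=> psG k_gt0 sHF projH.
have imH := morphim_res_reps psG sHF projH.
have [phi phi_ab phiE] := fin_all_exists2 (exists_aut_over_ab_rep sHF projH).
have untwist :
    {in H, forall x, [ffun i => phi i (res_reps H x (rep_rank H i))] = x}.
  by move=> x Hx; apply/ffunP => i; rewrite !ffunE enum_val_rep_rank phiE.
exists #|reps H|; split.
  rewrite (leq_trans (max_card _)) ?card_ord // andbT.
  by apply/card_gt0P; exists (rep H (Ordinal k_gt0)); apply: rep_in_reps.
split.
  exists (restrm (subsetT H) (res_reps H)); split.
    rewrite -imH; apply/isomP; split; last by rewrite morphim_restrm setIid.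
    exact: injm_res_reps.
  by move=> h Hh i j; rewrite /= ffunE; exact: fiberpow_coset sHF _ _ _ Hh.
exists (rep_rank H), phi; split.
  by move=> j; exists (enum_val j); apply: enum_valK_rep.
split=> //; apply/setP => x; apply/idP/imsetP => [Hx | [g]].
  by exists (res_reps H x); rewrite ?untwist // -imH mem_morphim ?inE.
by rewrite -imH => /morphimP[y _ Hy ->] ->; rewrite untwist.
Qed.
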